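(* Let $t>0$ be an integer. There is a constant $C_t$ such that the following holds. Let $G=(A\cup B,E,<)$ be a bipartite ordered graph with parts $A,B$ such that $A<B$. If there are no $t$-element subsets $A'\subseteq A$ and $B'\subseteq B$ such that every $a\in A'$ and $b\in B'$ form a double cherry in $G$, then $|E|\le C_t(|A|+|B|)$.
   Context: An ordered graph is a graph with a linear order on its vertices. $A<B$ means $a<b$ for all $a\in A$, $b\in B$. Two distinct vertices of an ordered graph form a double cherry if either they are adjacent, or they can be named $u,v$ so that there are vertices $u_1,u_2,v_1,v_2$ with $u_1<u<u_2<v_1<v<v_2$ and edges $(u,v_1),(u,v_2),(v,u_1),(v,u_2)$ in the graph. *)

(* An ordered graph on n vertices is modelled on 'I_n with the
   natural order; its edges are given by a symmetric irreflexive relation. *)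
From mathcomp Require Import all_boot all_order.
Set Implicit Arguments. Unset Strict Implicit. Unset Printing Implicit Defensive.

Definition simple_graph (n : nat) (e : rel 'I_n) : Prop :=
  (forall x y, e x y = e y x) /\ (forall x, ~~ e x x).

Definition edges (n : nat) (e : rel 'I_n) : {set 'I_n * 'I_n} :=
  [set p : 'I_n * 'I_n | (p.1 < p.2)%N && e p.1 p.2].

Definition cherry_config (n : nat) (e : rel 'I_n) (u v : 'I_n) : Prop :=
  exists u1 u2 v1 v2 : 'I_n,
    [/\ (u1 < u)%N, (u < u2)%N, (u2 < v1)%N, (v1 < v)%N & (v < v2)%N] /\
    [/\ e u v1, e u v2, e v u1 & e v u2].

Definition double_cherry (n : nat) (e : rel 'I_n) (x y : 'I_n) : Prop :=
  x != y /\ (e x y \/ cherry_config e x y \/ cherry_config e y x).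

Definition bipartite_ordered (n : nat) (e : rel 'I_n) (A B : {set 'I_n}) : Prop :=
  [/\ simple_graph e,
      A :|: B = [set: 'I_n],
      (forall a b, a \in A -> b \in B -> (a < b)%N) &
      (forall x y, e x y -> (x \in A) && (y \in B) || (x \in B) && (y \in A))].

From mathcomp Require Import all_boot all_order zify.

(* Call a in A and c in B mutual if each lies between two neighbours of the
   other.  Mutual pairs are double cherries and every edge is mutual, so it
   suffices to bound the number of mutual pairs; for this, all that matters is
   that the span of a vertex (the positions between two of its neighbours) is
   an interval.

   List the mutual partners of c in B increasingly.  If a0 is followed by at
   least t - 1 further entries, let W be the t consecutive entries starting at
   a0, and walk from c_0 = c to c_(j+1), the next vertex of B whose span
   contains a0.  If for t steps this successor is the same from every position
   between the ends of W, and every c_j is mutual with all of W, the c_j and W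
   form a K_(t,t) of mutual pairs.  So at the first failure either some a in W
   has c_j as its last mutual partner, or the successor of c_j changes at a
   breakpoint y inside W.  Walking the successor relation backwards from c_j
   recovers c from j together with a or y, and then a0 is one of at most t
   entries of the list of c.  A breakpoint is a position where the span of
   some vertex of B starts or ends, so there are at most 4|B| of them.  The
   pairs not covered are the last t - 1 entries of each list. *)

Set Implicit Arguments. Unset Strict Implicit. Unset Printing Implicit Defensive.

Lemma card_le_mul_fibres (X Y : finType) (S : {set X}) (T : {set Y})
    (R : X -> Y -> bool) k :
  (forall x, x \in S -> exists2 y, y \in T & R x y) ->
  (forall y, y \in T -> #|[set x in S | R x y]| <= k) ->
  #|S| <= k * #|T|.
Proof.
move=> S_cover fibre_le.
rewrite -sum1_card; apply: (@leq_trans (\sum_(x in S) \sum_(y in T) R x y)).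
  apply: leq_sum => x xS; have [y yT Rxy] := S_cover x xS.
  by rewrite (bigD1 y) //= Rxy.
rewrite exchange_big /= mulnC -sum_nat_const; apply: leq_sum => y yT.
apply: leq_trans (fibre_le y yT); rewrite -sum1_card big_mkcond /= [leqRHS]big_mkcond /=.
by apply: leq_sum => x _; rewrite !inE; case: (x \in S); case: (R x y).
Qed.

Lemma card_le_mul_fibres2 (X Y Z : finType) (S : {set X}) (T1 : {set Y})
    (T2 : {set Z}) (R1 : X -> Y -> bool) (R2 : X -> Z -> bool) k1 k2 :
  (forall x, x \in S ->
     (exists2 y, y \in T1 & R1 x y) \/ (exists2 z, z \in T2 & R2 x z)) ->
  (forall y, y \in T1 -> #|[set x in S | R1 x y]| <= k1) ->
  (forall z, z \in T2 -> #|[set x in S | R2 x z]| <= k2) ->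
  #|S| <= k1 * #|T1| + k2 * #|T2|.
Proof.
move=> S_cover fibre1_le fibre2_le.
pose S1 := [set x in S | [exists y in T1, R1 x y]].
pose S2 := [set x in S | [exists z in T2, R2 x z]].
have S_sub : S \subset S1 :|: S2.
  apply/subsetP => x xS; rewrite !inE xS /=.
  case: (S_cover x xS) => [[y yT Ry] | [z zT Rz]]; apply/orP.
    by left; apply/existsP; exists y; rewrite yT.
  by right; apply/existsP; exists z; rewrite zT.
apply: leq_trans (subset_leq_card S_sub) _; apply: leq_trans (leq_card_setU _ _) _.
apply: leq_add; [apply: (card_le_mul_fibres (R := R1)) | apply: (card_le_mul_fibres (R := R2))].
- by move=> x; rewrite inE => /andP [_ /existsP [y /andP [yT Ry]]]; exists y.
- move=> y yT; apply: leq_trans (fibre1_le y yT); apply/subset_leq_card/subsetP => x.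
  by rewrite !inE => /andP [/andP [xS _] Rx]; rewrite xS.
- by move=> x; rewrite inE => /andP [_ /existsP [z /andP [zT Rz]]]; exists z.
- move=> z zT; apply: leq_trans (fibre2_le z zT); apply/subset_leq_card/subsetP => x.
  by rewrite !inE => /andP [/andP [xS _] Rx]; rewrite xS.
Qed.

Lemma card_in_inj_lt (T : finType) (S : {set T}) (f : T -> nat) L :
  {in S &, injective f} -> (forall x, x \in S -> f x < L) -> #|S| <= L.
Proof.
move=> f_inj f_lt; rewrite cardE -(size_map f) -(size_iota 0 L).
apply: uniq_leq_size => [|_ /mapP [x xS ->]].
  by rewrite map_inj_in_uniq ?enum_uniq // => x y; rewrite !mem_enum; apply: f_inj.
by rewrite mem_iota f_lt // -mem_enum.
Qed.

Lemma card_in_inj_window (T : finType) (S : {set T}) (f : T -> nat) L :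
  {in S &, injective f} -> (forall x y, x \in S -> y \in S -> f x < f y + L) ->
  #|S| <= L.
Proof.
move=> f_inj near; have [-> | [x0 x0S]] := set_0Vmem S; first by rewrite cards0.
case: (arg_minnP f x0S) => m mS m_min.
apply: (@card_in_inj_lt _ _ (fun x => f x - f m)) => [x y xS yS /= E | x xS /=].
  by apply: f_inj => //; have := m_min x xS; have := m_min y yS; lia.
by have := near x m xS mS; have := m_min x xS; lia.
Qed.

Lemma exists_transition (P : nat -> bool) a b :
  a <= b -> P a -> ~~ P b -> exists y, [/\ a < y <= b, P y.-1 & ~~ P y].
Proof.
elim: b => [|b IH]; first by rewrite leqn0 => /eqP -> ->.
rewrite leq_eqVlt => /orP [/eqP -> -> // | ]; rewrite ltnS => ab Pa not_Pb1.
case: (boolP (P b)) => Pb; first by exists b.+1; split; rewrite // ltnS ab leqnn.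
have [y [/andP [ay yb] Py not_Py]] := IH ab Pa Pb; by exists y; split; rewrite ?ay ?leqW.
Qed.

Section MutualSpans.

Variable n : nat.
Variable span : 'I_n -> nat -> bool.
Hypothesis span_convex :
  forall x (y z w : nat), span x y -> span x z -> y <= w <= z -> span x w.
Variables A B : {set 'I_n}.

Definition mutual (a c : 'I_n) := [&& a \in A, c \in B, span a c & span c a].

Definition next_spanning (y : nat) (c d : 'I_n) :=
  [&& d \in B, c < d, span d y &
      [forall x : 'I_n, [&& x \in B, c < x & x < d] ==> ~~ span x y]].

Lemma next_spanning_before (y : nat) (c d x : 'I_n) :
  next_spanning y c d -> x \in B -> c < x -> x < d -> ~~ span x y.
Proof. by case/and4P=> _ _ _ /forallP /(_ x) + xB cx xd; rewrite xB cx xd. Qed.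

Lemma next_spanning_uniq (y : nat) (c d1 d2 : 'I_n) :
  next_spanning y c d1 -> next_spanning y c d2 -> d1 = d2.
Proof.
move=> n1 n2; have [B1 c1 s1 _] := and4P n1; have [B2 c2 s2 _] := and4P n2.
case: (ltngtP d1 d2) => [lt | lt | /val_inj //].
- by have := next_spanning_before n2 B1 c1 lt; rewrite s1.
- by have := next_spanning_before n1 B2 c2 lt; rewrite s2.
Qed.

Lemma first_spanning_after (y : nat) (c x : 'I_n) :
  x \in B -> c < x -> span x y -> exists2 d, next_spanning y c d & d <= x.
Proof.
move=> xB cx sx.
pose P m := [exists d : 'I_n, [&& d \in B, c < d, span d y & nat_of_ord d == m]].
have Px : P x by apply/existsP; exists x; rewrite xB cx sx eqxx.
have [m /existsP [d /and4P [dB cd sd /eqP dm]] m_min] := ex_minnP (ex_intro P x Px).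
subst m; exists d; last exact: m_min.
rewrite /next_spanning dB cd sd; apply/forallP => z; apply/implyP => /and3P [zB cz zd].
apply/negP => sz; suff /m_min : P z by rewrite leqNgt zd.
by apply/existsP; exists z; rewrite zB cz sz eqxx.
Qed.

Definition succB_opt (y : nat) (c : 'I_n) := [pick d | next_spanning y c d].

(* Defaults to c itself when no later vertex of B spans y. *)
Definition succB (y : nat) (c : 'I_n) := odflt c (succB_opt y c).

Lemma succB_optP (y : nat) (c d : 'I_n) : reflect (next_spanning y c d) (succB_opt y c == Some d).
Proof.
rewrite /succB_opt; case: pickP => [x nx | none]; apply: (iffP eqP).
- by case=> <-.
- by move=> nd; rewrite (next_spanning_uniq nx nd).
- by [].
- by move=> nd; have := none d; rewrite nd.
Qed.

Lemma succB_opt_None (y : nat) (c x : 'I_n) :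
  succB_opt y c = None -> x \in B -> c < x -> ~~ span x y.
Proof.
move=> none xB cx; apply/negP => sx.
have [d /succB_optP nd _] := first_spanning_after xB cx sx.
by rewrite none in nd.
Qed.

Definition predB (y : nat) (d : 'I_n) :=
  odflt d [pick c | [&& c \in B, span c y & next_spanning y c d]].

Lemma predB_spanning (y : nat) (c d : 'I_n) :
  c \in B -> span c y -> next_spanning y c d -> predB y d = c.
Proof.
move=> cB sc ncd; rewrite /predB; case: pickP => [x /and3P [xB sx nxd] | /(_ c)]; last first.
  by rewrite cB sc ncd.
have [_ xd _ _] := and4P nxd; have [_ cd _ _] := and4P ncd.
case: (ltngtP x c) => [lt | lt | /val_inj //].
- by have := next_spanning_before nxd cB lt cd; rewrite sc.
- by have := next_spanning_before ncd xB lt xd; rewrite sx.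
Qed.

Definition column (b : 'I_n) := [seq a <- enum 'I_n | mutual a b].

Definition rank (a b : 'I_n) := index a (column b).

Lemma mem_column (a b : 'I_n) : (a \in column b) = mutual a b.
Proof. by rewrite mem_filter mem_enum andbT. Qed.

Lemma column_uniq (b : 'I_n) : uniq (column b).
Proof. by rewrite filter_uniq // enum_uniq. Qed.

Lemma column_nth_lt (b x0 : 'I_n) (i j : nat) :
  i < j -> j < size (column b) -> nth x0 (column b) i < nth x0 (column b) j.
Proof.
have sorted_col : sorted (fun x y : 'I_n => x < y) (column b).
  apply: sorted_filter; first by move=> x y z; apply: ltn_trans.
  by have := iota_ltn_sorted 0 n; rewrite -val_enum_ord sorted_map.
move=> ij jb; apply: (sorted_ltn_nth (fun _ _ _ => @ltn_trans _ _ _) x0 sorted_col) => //.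
by rewrite inE (ltn_trans ij).
Qed.

Lemma column_nth_le (b x0 : 'I_n) (i j : nat) :
  i <= j -> j < size (column b) -> nth x0 (column b) i <= nth x0 (column b) j.
Proof.
by rewrite leq_eqVlt => /orP [/eqP -> // | ij jb]; apply/ltnW/column_nth_lt.
Qed.

Lemma rank_lt (a b : 'I_n) : mutual a b -> rank a b < size (column b).
Proof. by rewrite /rank index_mem mem_column. Qed.

Lemma nth_rank (a b : 'I_n) : mutual a b -> nth b (column b) (rank a b) = a.
Proof. by move=> ab; rewrite nth_index ?mem_column. Qed.

Lemma rank_inj (b a a' : 'I_n) : mutual a b -> mutual a' b -> rank a b = rank a' b -> a = a'.
Proof. by move=> ab a'b E; rewrite -(nth_rank ab) -(nth_rank a'b) E. Qed.

Lemma card_column_fibre (F : {set 'I_n * 'I_n}) L :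
  (forall p, p \in F -> mutual p.1 p.2) ->
  (forall p q, p \in F -> q \in F -> p.2 = q.2 /\ rank p.1 p.2 < rank q.1 q.2 + L) ->
  #|F| <= L.
Proof.
move=> F_mutual F_near; apply: (@card_in_inj_window _ _ (fun p => rank p.1 p.2)).
  move=> [a b] [a' b'] pF qF /= E; have [/= bb' _] := F_near _ _ pF qF; subst b'.
  by rewrite [a](rank_inj (F_mutual _ pF) (F_mutual _ qF) E).
by move=> p q pF qF; case: (F_near p q pF qF).
Qed.

Definition last_mutual (a c : 'I_n) :=
  mutual a c && [forall d : 'I_n, (c < d) ==> ~~ mutual a d].

Lemma last_mutual_uniq (a c c' : 'I_n) : last_mutual a c -> last_mutual a c' -> c = c'.
Proof.
move=> /andP [ac /forallP last_c] /andP [ac' /forallP last_c'].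
case: (ltngtP c c') => [lt | lt | /val_inj //].
- by have := last_c c'; rewrite lt ac'.
- by have := last_c' c; rewrite lt ac.
Qed.

Lemma last_mutual_succB_None (a c : 'I_n) :
  mutual a c -> succB_opt a c = None -> last_mutual a c.
Proof.
move=> ac none; rewrite /last_mutual ac; apply/forallP => d; apply/implyP => cd.
by apply/negP => /and4P [_ dB _ sd]; move: (succB_opt_None none dB cd); rewrite sd.
Qed.

Lemma last_mutual_next (a c d : 'I_n) :
  mutual a c -> next_spanning a c d -> ~~ span a d -> last_mutual a c.
Proof.
move=> ac ncd not_sad; rewrite /last_mutual ac; apply/forallP => x; apply/implyP => cx.
apply/negP => /and4P [_ xB sax sxa]; have [_ _ sac _] := and4P ac; have [_ cd _ _] := and4P ncd.
case: (ltnP x d) => [xd | dx].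
- by have := next_spanning_before ncd xB cx xd; rewrite sxa.
- by move: not_sad; rewrite (span_convex sac sax) // (ltnW cd).
Qed.

Definition breakpoint (c : 'I_n) (y : nat) :=
  [&& 0 < y, span c y.-1, span c y & succB_opt y.-1 c != succB_opt y c].

Lemma breakpoint_of_transition (c : 'I_n) (y : nat) (d : 'I_n) :
  0 < y -> span c y.-1 -> span c y ->
  next_spanning y.-1 c d -> ~~ next_spanning y c d -> breakpoint c y.
Proof.
move=> y_gt0 s1 s2 /succB_optP/eqP n1 not_n2; rewrite /breakpoint y_gt0 s1 s2 n1 /=.
by apply: contra not_n2 => /eqP/esym/eqP/succB_optP.
Qed.

Definition breakpoints := [set cy : 'I_n * 'I_n | (cy.1 \in B) && breakpoint cy.1 cy.2].

Definition switch (d : 'I_n) (y : nat) (starts : bool) :=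
  (0 < y) &&
  (if starts then ~~ span d y.-1 && span d y else span d y.-1 && ~~ span d y).

Lemma switch_uniq (d : 'I_n) (y y' : nat) (s : bool) : switch d y s -> switch d y' s -> y = y'.
Proof.
wlog lt : y y' / y < y'.
  move=> W s1 s2; case: (ltngtP y y') => [lt | lt | //]; first exact: W s1 s2.
  by apply/esym; apply: W s2 s1.
have lt_pred : y <= y'.-1 by move: lt; clear; lia.
case: s => /andP [y_gt0 s1] /andP [_ s2].
- case/andP: s1 => _ s1; case/andP: s2 => not_s2 s2.
  by move: not_s2; rewrite (span_convex s1 s2) // lt_pred leq_pred.
- case/andP: s1 => s1 not_s1; case/andP: s2 => s2 _.
  by move: not_s1; rewrite (span_convex s1 s2) // leq_pred lt_pred.
Qed.

Lemma breakpoint_switch (c : 'I_n) (y : nat) : c \in B -> breakpoint c y ->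
  exists2 ds, ds \in setX B [set: bool] &
    switch ds.1 y ds.2 && ((c == predB y.-1 ds.1) || (c == predB y ds.1)).
Proof.
move=> cB /and4P [y_gt0 s1 s2 ne].
have ending d : next_spanning y.-1 c d -> ~~ span d y ->
    exists2 ds, ds \in setX B [set: bool] &
      switch ds.1 y ds.2 && ((c == predB y.-1 ds.1) || (c == predB y ds.1)).
  move=> ncd not_sd; have [dB _ sd _] := and4P ncd; exists (d, false); first by rewrite !inE dB.
  by rewrite /switch /= y_gt0 sd not_sd (predB_spanning cB s1 ncd) eqxx.
have starting d : next_spanning y c d -> ~~ span d y.-1 ->
    exists2 ds, ds \in setX B [set: bool] &
      switch ds.1 y ds.2 && ((c == predB y.-1 ds.1) || (c == predB y ds.1)).
  move=> ncd not_sd; have [dB _ sd _] := and4P ncd; exists (d, true); first by rewrite !inE dB.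
  by rewrite /switch /= y_gt0 sd not_sd (predB_spanning cB s2 ncd) eqxx orbT.
case E1: (succB_opt y.-1 c) ne => [d1 |]; case E2: (succB_opt y c) => [d2 |] ne.
- move/eqP/succB_optP: E1 => n1; move/eqP/succB_optP: E2 => n2.
  have [d1B cd1 _ _] := and4P n1; have [d2B cd2 _ _] := and4P n2.
  case: (ltngtP d1 d2) => [lt | lt | /val_inj eq]; last by rewrite eq eqxx in ne.
  + exact: ending n1 (next_spanning_before n2 d1B cd1 lt).
  + exact: starting n2 (next_spanning_before n1 d2B cd2 lt).
- move/eqP/succB_optP: E1 => n1; have [d1B cd1 _ _] := and4P n1.
  exact: ending n1 (succB_opt_None E2 d1B cd1).
- move/eqP/succB_optP: E2 => n2; have [d2B cd2 _ _] := and4P n2.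
  exact: starting n2 (succB_opt_None E1 d2B cd2).
- by rewrite eqxx in ne.
Qed.

Lemma card_breakpoints : #|breakpoints| <= 2 * (#|B| * 2).
Proof.
have -> : #|B| * 2 = #|setX B [set: bool]| by rewrite cardsX cardsT card_bool.
apply: (card_le_mul_fibres (R := fun (cy : 'I_n * 'I_n) (ds : 'I_n * bool) =>
   switch ds.1 cy.2 ds.2 && ((cy.1 == predB cy.2.-1 ds.1) || (cy.1 == predB cy.2 ds.1)))).
  by move=> [c y]; rewrite inE => /andP [cB bp]; apply: breakpoint_switch.
move=> [d s] _.
(* In a fibre y is fixed by the switch, and c is one of two predecessors of d. *)
apply: (@card_in_inj_lt _ _ (fun cy : 'I_n * 'I_n => cy.1 != predB cy.2.-1 d)); last first.
  by move=> x _; case: (_ != _).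
move=> [c y] [c' y']; rewrite !inE /= => /andP [_ /andP [sw pc]] /andP [_ /andP [sw' pc']].
have /val_inj yy' := switch_uniq sw sw'; subst y'.
by case: eqP pc => [-> _ | _ /= /eqP ->]; case: eqP pc' => [-> _ | _ /= /eqP ->].
Qed.

Variable t : nat.
Hypothesis t_gt0 : 0 < t.
Hypothesis no_biclique : forall A' B' : {set 'I_n}, #|A'| = t -> #|B'| = t ->
  ~ (forall a c, a \in A' -> c \in B' -> mutual a c).

Definition window (a0 b : 'I_n) (i : nat) := nth b (column b) (rank a0 b + i).

Definition window_top (a0 b : 'I_n) := window a0 b t.-1.

Definition full_window (a0 b : 'I_n) := mutual a0 b && (rank a0 b + t <= size (column b)).

Definition in_window (a0 b a : 'I_n) := [exists i : 'I_t, a == window a0 b i].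

Definition chain (a0 b : 'I_n) (j : nat) := iter j (succB a0) b.

Definition step_coherent (a0 b : 'I_n) (i : nat) :=
  [forall y : 'I_n, (a0 <= y <= window_top a0 b) ==>
                    next_spanning y (chain a0 b i) (chain a0 b i.+1)].

Definition window_spans (a0 b : 'I_n) (i : nat) :=
  [forall a, in_window a0 b a ==> span a (chain a0 b i)].

Fixpoint coherent (a0 b : 'I_n) (j : nat) :=
  if j is j'.+1 then
    [&& coherent a0 b j', step_coherent a0 b j' & window_spans a0 b j]
  else window_spans a0 b 0.

Lemma coherent_step (a0 b : 'I_n) (j i : nat) :
  coherent a0 b j -> i < j -> step_coherent a0 b i.
Proof.
elim: j => [// | j IH] /= /and3P [coh step _].
by rewrite ltnS leq_eqVlt => /orP [/eqP -> // | ]; apply: IH.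
Qed.

Lemma coherent_spans (a0 b : 'I_n) (j i : nat) :
  coherent a0 b j -> i <= j -> window_spans a0 b i.
Proof.
elim: j => [| j IH] /=; first by move=> coh; rewrite leqn0 => /eqP ->.
by move=> /and3P [coh _ spans]; rewrite leq_eqVlt => /orP [/eqP -> // | ]; apply: IH.
Qed.

Definition charge_last (p : 'I_n * 'I_n) (ja : 'I_t * 'I_n) :=
  [&& coherent p.1 p.2 ja.1, in_window p.1 p.2 ja.2 & last_mutual ja.2 (chain p.1 p.2 ja.1)].

Definition charge_break (p : 'I_n * 'I_n) (jcy : 'I_t * ('I_n * 'I_n)) :=
  [&& coherent p.1 p.2 jcy.1, jcy.2.1 == chain p.1 p.2 jcy.1, p.1 < jcy.2.2,
      jcy.2.2 <= window_top p.1 p.2 & breakpoint jcy.2.1 jcy.2.2].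

Section FullWindow.

Variables a0 b : 'I_n.
Hypothesis full : full_window a0 b.

Lemma full_mutual : mutual a0 b.
Proof. by case/andP: full. Qed.

Lemma window_index_lt (i : nat) : i < t -> rank a0 b + i < size (column b).
Proof. by move=> it; apply: leq_trans (proj2 (andP full)); rewrite ltn_add2l. Qed.

Lemma window0 : window a0 b 0 = a0.
Proof. by rewrite /window addn0 nth_rank // full_mutual. Qed.

Lemma window_mutual (i : nat) : i < t -> mutual (window a0 b i) b.
Proof. by move=> it; rewrite -mem_column mem_nth ?window_index_lt. Qed.

Lemma window_bounds (i : nat) : i < t -> a0 <= window a0 b i <= window_top a0 b.
Proof.
move=> it; have top_lt : t.-1 < t by rewrite prednK.
apply/andP; split; first rewrite -{1}window0.
  by apply: column_nth_le; rewrite ?leq_add2l ?window_index_lt.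
by apply: column_nth_le; rewrite ?leq_add2l ?window_index_lt // -ltnS prednK.
Qed.

Lemma in_window_mutual (a : 'I_n) : in_window a0 b a -> mutual a b.
Proof. by case/existsP => i /eqP ->; apply: window_mutual. Qed.

Lemma in_window_bounds (a : 'I_n) : in_window a0 b a -> a0 <= a <= window_top a0 b.
Proof. by case/existsP => i /eqP ->; apply: window_bounds. Qed.

Lemma in_window_rank (a : 'I_n) :
  in_window a0 b a -> exists2 i, i < t & rank a b = rank a0 b + i.
Proof.
case/existsP => i /eqP ->; exists i => //.
by rewrite /rank /window index_uniq ?column_uniq ?window_index_lt.
Qed.

Lemma in_window_a0 : in_window a0 b a0.
Proof. by apply/existsP; exists (Ordinal t_gt0); rewrite /= window0. Qed.

Lemma a0_window_bounds : a0 <= a0 <= window_top a0 b.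
Proof. exact: in_window_bounds in_window_a0. Qed.

Lemma coherent0 : coherent a0 b 0.
Proof. by apply/forallP => a; apply/implyP => /in_window_mutual /and4P []. Qed.

Lemma chainS (j : nat) : chain a0 b j.+1 = succB a0 (chain a0 b j).
Proof. exact: iterS. Qed.

Lemma step_coherentP (i : nat) : step_coherent a0 b i ->
  forall y : nat, a0 <= y <= window_top a0 b ->
  next_spanning y (chain a0 b i) (chain a0 b i.+1).
Proof.
move=> /forallP step y y_in.
have y_lt : y < n by apply: leq_ltn_trans (ltn_ord (window_top a0 b)); case/andP: y_in.
by have := step (Ordinal y_lt); rewrite /= y_in.
Qed.

Section Coherent.

Variable j : nat.
Hypothesis coh : coherent a0 b j.

Lemma chain_in_B (i : nat) : i <= j -> chain a0 b i \in B.
Proof.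
case: i => [_ | i ij]; first by case/and4P: full_mutual.
by case/and4P: (step_coherentP (coherent_step coh ij) a0_window_bounds).
Qed.

Lemma chain_spans (i : nat) : i <= j ->
  forall y : nat, a0 <= y <= window_top a0 b -> span (chain a0 b i) y.
Proof.
case: i => [_ | i ij] y y_in; last first.
  by case/and4P: (step_coherentP (coherent_step coh ij) y_in).
have [_ _ _ sba0] := and4P full_mutual.
have top_lt : t.-1 < t by rewrite prednK.
have [_ _ _ sbtop] := and4P (window_mutual top_lt).
exact: span_convex sba0 sbtop y_in.
Qed.

Lemma chain_mutual (i : nat) (a : 'I_n) :
  i <= j -> in_window a0 b a -> mutual a (chain a0 b i).
Proof.
move=> ij aW; have [aA _ _ _] := and4P (in_window_mutual aW).
rewrite /mutual aA chain_in_B // chain_spans ?in_window_bounds // andbT.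
exact: implyP (forallP (coherent_spans coh ij) a) aW.
Qed.

Lemma chain_lt (i k : nat) : i < k <= j -> chain a0 b i < chain a0 b k.
Proof.
case/andP; elim: k => [// | k IH]; rewrite ltnS => ik kj.
have step : chain a0 b k < chain a0 b k.+1.
  by case/and4P: (step_coherentP (coherent_step coh kj) a0_window_bounds).
move: ik; rewrite leq_eqVlt => /orP [/eqP -> // | ik].
exact: ltn_trans (IH ik (ltnW kj)) step.
Qed.

Lemma chain_back (y : nat) : a0 <= y <= window_top a0 b ->
  iter j (predB y) (chain a0 b j) = b.
Proof.
move=> y_in; suff back i : i <= j -> iter i (predB y) (chain a0 b i) = b by apply: back.
elim: i => [// | i IH] ij; rewrite iterSr.
have next := step_coherentP (coherent_step coh ij) y_in.
by rewrite (predB_spanning (chain_in_B (ltnW ij)) (chain_spans (ltnW ij) y_in) next) IH // ltnW.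
Qed.

End Coherent.


Lemma not_coherent_top : ~~ coherent a0 b t.-1.
Proof.
apply/negP => coh; have ord_le (i : 'I_t) : i <= t.-1 by rewrite -ltnS prednK.
apply: (@no_biclique [set window a0 b i | i : 'I_t] [set chain a0 b i | i : 'I_t]).
- rewrite card_imset ?card_ord // => i k /eqP.
  rewrite /window nth_uniq ?column_uniq ?window_index_lt // eqn_add2l.
  by move/eqP/val_inj.
- rewrite card_imset ?card_ord // => i k E; apply: val_inj.
  case: (ltngtP i k) => [lt | lt | //].
  + by have := chain_lt coh (i := i) (k := k); rewrite lt ord_le E ltnn => /(_ isT).
  + by have := chain_lt coh (i := k) (k := i); rewrite lt ord_le E ltnn => /(_ isT).
- move=> _ _ /imsetP [i _ ->] /imsetP [k _ ->].
  by apply: (chain_mutual coh (ord_le k)); apply/existsP; exists i.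
Qed.

Lemma span_failure_charge (j : nat) : j < t -> coherent a0 b j -> step_coherent a0 b j ->
  ~~ window_spans a0 b j.+1 ->
  exists2 ja, ja \in setX [set: 'I_t] A & charge_last (a0, b) ja.
Proof.
move=> jt coh step /forallPn [a]; rewrite negb_imply => /andP [aW not_span].
have [aA _ _ _] := and4P (in_window_mutual aW).
exists (Ordinal jt, a); first by rewrite !inE.
rewrite /charge_last /= coh aW /=.
apply: last_mutual_next (chain_mutual coh (leqnn j) aW) _ not_span.
exact: step_coherentP step _ (in_window_bounds aW).
Qed.

Lemma step_failure_charge (j : nat) : j < t -> coherent a0 b j -> ~~ step_coherent a0 b j ->
  (exists2 ja, ja \in setX [set: 'I_t] A & charge_last (a0, b) ja) \/
  (exists2 jcy, jcy \in setX [set: 'I_t] breakpoints & charge_break (a0, b) jcy).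
Proof.
move=> jt coh /forallPn [y]; rewrite negb_imply => /andP [y_in not_next].
set c := chain a0 b j; set c' := chain a0 b j.+1.
case: (boolP (next_spanning a0 c c')) => [next_a0 | not_next_a0]; last first.
  left; exists (Ordinal jt, a0); first by rewrite !inE; case/and4P: full_mutual.
  rewrite /charge_last /= coh in_window_a0 /=.
  apply: last_mutual_succB_None (chain_mutual coh (leqnn j) in_window_a0) _.
  case E: (succB_opt a0 c) => [d |] //; move: not_next_a0.
  by rewrite /c' chainS -/c /succB E; move/eqP/succB_optP: E => ->.
right; have [a0y y_top] := andP y_in.
have [y' [/andP [a0y' y'y] next' not_next']] :=
  exists_transition (P := fun z => next_spanning z c c') a0y next_a0 not_next.
have y'_top : y' <= window_top a0 b := leq_trans y'y y_top.
have y'_lt : y' < n := leq_ltn_trans y'y (ltn_ord y).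
have c_spans z : a0 <= z <= y' -> span c z.
  by case/andP=> a0z zy'; apply: (chain_spans coh (leqnn j)); rewrite a0z (leq_trans zy').
have bp : breakpoint c y'.
  apply: breakpoint_of_transition next' not_next'; first exact: leq_ltn_trans a0y'.
    by apply: c_spans; rewrite leq_pred andbT; move: a0y'; clear; lia.
  by apply: c_spans; rewrite leqnn andbT ltnW.
exists (Ordinal jt, (c, Ordinal y'_lt)).
  by rewrite !inE /= bp andbT (chain_in_B coh (leqnn j)).
by rewrite /charge_break /= coh eqxx a0y' y'_top.
Qed.

Lemma full_window_charge :
  (exists2 ja, ja \in setX [set: 'I_t] A & charge_last (a0, b) ja) \/
  (exists2 jcy, jcy \in setX [set: 'I_t] breakpoints & charge_break (a0, b) jcy).
Proof.
have [[| j] [/andP [// _ jt] /= coh not_coh]] :=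
  exists_transition (P := coherent a0 b) (leq0n t.-1) coherent0 not_coherent_top.
have jt' : j < t := leq_trans jt (leq_pred t).
move: not_coh; rewrite /= coh /=.
case: (boolP (step_coherent a0 b j)) => [step | not_step] /= not_span.
- by left; apply: span_failure_charge jt' coh step not_span.
- exact: step_failure_charge jt' coh not_step.
Qed.

End FullWindow.

Definition full_windows := [set p : 'I_n * 'I_n | full_window p.1 p.2].

Lemma card_charge_last_fibre (ja : 'I_t * 'I_n) :
  #|[set p in full_windows | charge_last p ja]| <= t.
Proof.
apply: card_column_fibre => [p | [a0 b] [a0' b']].
  by rewrite !inE => /andP [/andP [+ _] _].
rewrite !inE /charge_last /= => /andP [W /and3P [coh aW last]] /andP [W' /and3P [coh' aW' last']].
have bb' : b = b'.
  rewrite -(chain_back W coh (in_window_bounds W aW)).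
  rewrite -(chain_back W' coh' (in_window_bounds W' aW')).
  by rewrite (last_mutual_uniq last last').
subst b'; split=> //.
have [i it rank_a] := in_window_rank W aW; have [i' it' rank_a'] := in_window_rank W' aW'.
by move: rank_a rank_a' it it'; clear; lia.
Qed.

Lemma card_charge_break_fibre (jcy : 'I_t * ('I_n * 'I_n)) :
  #|[set p in full_windows | charge_break p jcy]| <= t.
Proof.
case: jcy => j [c y]; apply: card_column_fibre => [p | [a0 b] [a0' b']].
  by rewrite !inE => /andP [/andP [+ _] _].
rewrite !inE /charge_break /= => /andP [W /and5P [coh /eqP cE a0y yt _]]
  /andP [W' /and5P [coh' /eqP cE' a0'y yt' _]].
have pred_y_in (a1 b1 : 'I_n) : a1 < y -> y <= window_top a1 b1 -> a1 <= y.-1 <= window_top a1 b1.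
  by move=> a1y ytop; apply/andP; split; move: a1y ytop; clear; lia.
have bb' : b = b'.
  rewrite -(chain_back W coh (pred_y_in _ _ a0y yt)) -(chain_back W' coh' (pred_y_in _ _ a0'y yt')).
  by rewrite -cE -cE'.
subst b'; split=> //; rewrite ltnNge; apply/negP => far.
have : window_top a0' b < a0.
  have [Wm _] := andP W; rewrite -(nth_rank Wm) /window_top /window.
  by apply: column_nth_lt (rank_lt Wm); move: far t_gt0; clear; lia.
by move: a0y yt'; clear; lia.
Qed.

Lemma card_full_windows :
  #|full_windows| <= t * (t * #|A|) + t * (t * #|breakpoints|).
Proof.
rewrite -{2 4}[t]card_ord -!cardsT -!cardsX.
apply: (card_le_mul_fibres2 (R1 := charge_last) (R2 := charge_break)).
- by move=> [a0 b]; rewrite inE; apply: full_window_charge.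
- by move=> ja _; apply: card_charge_last_fibre.
- by move=> jcy _; apply: card_charge_break_fibre.
Qed.

Lemma card_short_columns :
  #|[set p : 'I_n * 'I_n | mutual p.1 p.2 && (size (column p.2) < rank p.1 p.2 + t)]|
    <= t * #|B|.
Proof.
apply: (card_le_mul_fibres (R := fun p b => p.2 == b)).
  by move=> [a b]; rewrite inE => /andP [/and4P [_ bB _ _] _]; exists b.
move=> b _; apply: card_column_fibre => [p | [a b1] [a' b2]]; rewrite !inE /=.
  by case/andP => /andP [].
move=> /andP [/andP [ab _] /eqP b1E] /andP [/andP [_ short] /eqP b2E] /=.
subst b1 b2; split=> //; have := rank_lt ab; move: short; clear; lia.
Qed.

Theorem card_mutual_le :
  #|[set p : 'I_n * 'I_n | mutual p.1 p.2]| <= 5 * t * t * (#|A| + #|B|).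
Proof.
set short := [set p : 'I_n * 'I_n | mutual p.1 p.2 && (size (column p.2) < rank p.1 p.2 + t)].
have cover : [set p : 'I_n * 'I_n | mutual p.1 p.2] \subset full_windows :|: short.
  apply/subsetP => [[a b]]; rewrite !inE /full_window /= => ab.
  by rewrite ab /=; case: leqP.
apply: leq_trans (subset_leq_card cover) _; apply: leq_trans (leq_card_setU _ _) _.
have full_le := card_full_windows; have short_le : #|short| <= t * #|B| := card_short_columns.
have bp_le : #|breakpoints| <= 4 * #|B| by have := card_breakpoints; lia.
have {}bp_le : t * (t * #|breakpoints|) <= t * (t * (4 * #|B|)).
  by rewrite !leq_mul2l bp_le !orbT.
have tB_le : t * #|B| <= t * (t * #|B|) by rewrite leq_mul2l leq_pmull ?orbT.
move: full_le short_le bp_le tB_le; clear; lia.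
Qed.

End MutualSpans.

Section NeighbourSpans.

Variables (n : nat) (e : rel 'I_n) (A B : {set 'I_n}).
Hypothesis G : bipartite_ordered e A B.

Definition nbr_span (x : 'I_n) (y : nat) :=
  [exists v : 'I_n, e x v && (v <= y)] && [exists v : 'I_n, e x v && (y <= v)].

Lemma nbr_span_convex (x : 'I_n) (y z w : nat) :
  nbr_span x y -> nbr_span x z -> y <= w <= z -> nbr_span x w.
Proof.
case/andP=> /existsP [v1 /andP [e1 l1]] _ /andP [_ /existsP [v2 /andP [e2 l2]]] /andP [yw wz].
apply/andP; split; apply/existsP.
- by exists v1; rewrite e1 (leq_trans l1 yw).
- by exists v2; rewrite e2 (leq_trans wz l2).
Qed.

Lemma nbr_span_nbr (x v : 'I_n) : e x v -> nbr_span x v.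
Proof. by move=> exv; apply/andP; split; apply/existsP; exists v; rewrite exv leqnn. Qed.

Lemma bipartite_notin_B (a : 'I_n) : a \in A -> a \notin B.
Proof. by case: G => _ _ AB _ aA; apply/negP => /(AB a a aA); rewrite ltnn. Qed.

Lemma bipartite_edge (x y : 'I_n) :
  e x y -> (x \in A) && (y \in B) || (x \in B) && (y \in A).
Proof. by case: G => _ _ _; apply. Qed.

Lemma bipartite_nbr_A (c u : 'I_n) : c \in B -> e c u -> u \in A.
Proof.
move=> cB /bipartite_edge /orP [/andP [cA _] | /andP [_ //]].
by move: (bipartite_notin_B cA); rewrite cB.
Qed.

Lemma bipartite_nbr_B (a v : 'I_n) : a \in A -> e a v -> v \in B.
Proof.
move=> aA /bipartite_edge /orP [/andP [_ //] | /andP [aB _]].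
by move: (bipartite_notin_B aA); rewrite aB.
Qed.

Lemma edge_mutual (x y : 'I_n) : x < y -> e x y -> mutual nbr_span A B x y.
Proof.
have [[e_sym _] _ AB _] := G.
move=> xy exy; have eyx : e y x by rewrite e_sym.
rewrite /mutual (nbr_span_nbr exy) (nbr_span_nbr eyx) !andbT.
case/orP: (bipartite_edge exy) => /andP [xS yS] //.
by move: (AB y x yS xS); rewrite ltnNge ltnW.
Qed.

Lemma mutual_double_cherry (a c : 'I_n) : mutual nbr_span A B a c -> double_cherry e a c.
Proof.
have [[e_sym _] _ AB _] := G.
case/and4P=> aA cB /andP [/existsP [v1 /andP [ev1 v1c]] /existsP [v2 /andP [ev2 cv2]]]
  /andP [/existsP [u1 /andP [eu1 u1a]] /existsP [u2 /andP [eu2 au2]]].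
split; first by apply: contraNneq _ (bipartite_notin_B aA) => ->.
case: (boolP (e a c)) => [eac | not_eac]; [by left | right; left].
have nbr_a_lt (x : 'I_n) : e c x -> x <= a -> x < a.
  move=> ecx; rewrite leq_eqVlt => /orP [/eqP/val_inj xa | //].
  by move: not_eac; rewrite -xa e_sym ecx.
have nbr_c_lt (x : 'I_n) : e a x -> x <= c -> x < c.
  move=> eax; rewrite leq_eqVlt => /orP [/eqP/val_inj xc | //].
  by move: not_eac; rewrite -xc eax.
have nbr_gt_a (x : 'I_n) : e c x -> a <= x -> a < x.
  move=> ecx; rewrite leq_eqVlt => /orP [/eqP/val_inj ax | //].
  by move: not_eac; rewrite ax e_sym ecx.
have nbr_gt_c (x : 'I_n) : e a x -> c <= x -> c < x.
  move=> eax; rewrite leq_eqVlt => /orP [/eqP/val_inj cx | //].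
  by move: not_eac; rewrite cx eax.
exists u1, u2, v1, v2; split; split => //; rewrite ?nbr_a_lt ?nbr_c_lt ?nbr_gt_a ?nbr_gt_c //.
exact: AB (bipartite_nbr_A cB eu2) (bipartite_nbr_B aA ev1).
Qed.

Lemma double_cherry_biclique (t : nat) (A' B' : {set 'I_n}) :
  0 < t -> #|A'| = t -> #|B'| = t ->
  (forall a c, a \in A' -> c \in B' -> mutual nbr_span A B a c) ->
  [/\ A' \subset A, B' \subset B, #|A'| = t, #|B'| = t &
      forall a c, a \in A' -> c \in B' -> double_cherry e a c].
Proof.
move=> t_gt0 cardA' cardB' mutual_AB'; split=> //.
- apply/subsetP => a aA'; have /card_gt0P [c cB'] : 0 < #|B'| by rewrite cardB'.
  by case/and4P: (mutual_AB' a c aA' cB').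
- apply/subsetP => c cB'; have /card_gt0P [a aA'] : 0 < #|A'| by rewrite cardA'.
  by case/and4P: (mutual_AB' a c aA' cB').
- by move=> a c aA' cB'; apply/mutual_double_cherry/mutual_AB'.
Qed.

End NeighbourSpans.

Theorem corollary3p2 :
  forall t : nat, (0 < t)%N ->
  exists C : nat,
  forall (n : nat) (e : rel 'I_n) (A B : {set 'I_n}),
    bipartite_ordered e A B ->
    ~ (exists (A' B' : {set 'I_n}),
          [/\ A' \subset A, B' \subset B, #|A'| = t, #|B'| = t &
              forall a b, a \in A' -> b \in B' -> double_cherry e a b]) ->
    (#|edges e| <= C * (#|A| + #|B|))%N.
Proof.
move=> t t_gt0; exists (5 * t * t) => n e A B G no_KK.
apply: (leq_trans _ (@card_mutual_le _ _ (@nbr_span_convex n e) A B t t_gt0 _)).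
- apply/subset_leq_card/subsetP => [[x y]]; rewrite !inE /= => /andP [xy exy].
  exact: (edge_mutual G xy exy).
- move=> A' B' cardA' cardB' mutual_AB'; apply: no_KK; exists A', B'.
  exact: (double_cherry_biclique G t_gt0 cardA' cardB' mutual_AB').
Qed.
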